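(* In the fixed-flow two-parallel-path setting with $l_{P_1}<l_{P_2}$, and with initial flows at vertices other than $s,d$ satisfying $f_v(0)\le\bar f$, $b_v(0)\le\bar b$, let $T_1=\max_{(u,v)\in E}\log(p_{uv}(0)/(\bar f+\bar b))/\log(1/\delta)$. Then for every integer $t\ge L+\max(0,T_1)$, $$r_{ss_1}(t+1)\ \ge\ r_{\min}(t)\left(1+\frac{\alpha-\beta}{C+\beta}\right),\qquad \alpha=1-l_{P_1},\ \beta=1-l_{P_2},\ C=\frac{5(\bar f+\bar b)}{\bar b(1-\delta)}.$$
   Context: Model (linear decision rule). Directed graph $G=(V,E)$, source $s$, destination $d$, discrete time; pheromone $p_{uv}(t)$, forward flows $f_v(t)$, backward flows $b_v(t)$; leakages $l_v\in[0,1]$; decay $\delta\in(0,1)$; exogenous inputs $f_s(t),b_d(t)$. Edge flows: $f_{uv}(t)=f_u(t)p_{uv}(t)/\sum_{z:(u,z)\in E}p_{uz}(t)$, $b_{uv}(t)=b_v(t)p_{uv}(t)/\sum_{z:(z,v)\in E}p_{zv}(t)$ (at a vertex with a single outgoing, resp. incoming, edge the whole flow goes along it). Updates: $f_v(t+1)=(1-l_v)\sum_{z:(z,v)\in E}f_{zv}(t)$ for $v\neq s$, $b_u(t+1)=(1-l_u)\sum_{z:(u,z)\in E}b_{uz}(t)$ for $u\ne d$, $p_{uv}(t+1)=\delta(p_{uv}(t)+f_{uv}(t)+b_{uv}(t))$. Path leakage $l_P=1-\prod_{v\in P\setminus\{s,d\}}(1-l_v)$. Two parallel paths: $G$ is the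 union of directed paths $P_1,P_2$ from $s$ to $d$ sharing only $s,d$; $s_1,s_2$ are the successors of $s$ and $d_1,d_2$ the predecessors of $d$ on $P_1,P_2$; $m=\mathrm{len}(P_1)$, $n=\mathrm{len}(P_2)$ (numbers of edges), $L=\max(m,n)$. Potential: $r_{ss_1}(t)=p_{ss_1}(t)/p_{ss_2}(t)$, $r_{d_1d}(t)=p_{d_1d}(t)/p_{d_2d}(t)$, and for $t\ge L$, $r_{\min}(t)=\min\{r_{ss_1}(t-i),\,r_{d_1d}(t-i):0\le i\le L-1\}$. Fixed-flow setting: $f_s(t)=\bar f>0$ and $b_d(t)=\bar b>0$ for all $t$, and all initial pheromone levels $p_{uv}(0)$ are positive. *)

From HB Require Import structures.
From mathcomp Require Import all_boot all_order all_algebra.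
From mathcomp Require Import boolp reals exp.
Set Implicit Arguments. Unset Strict Implicit. Unset Printing Implicit Defensive.
Import Order.TTheory GRing.Theory Num.Theory.
Local Open Scope ring_scope.

Section Model.
Variables (R : realType) (V : finType) (E : rel V).

(** Edge flows of the linear decision rule (only meaningful on edges). *)
Definition fedge (f : nat -> V -> R) (p : nat -> V -> V -> R) (t : nat)
  (u v : V) : R :=
  if #|[pred z | E u z]| == 1%N then f t u
  else f t u * p t u v / (\sum_(z | E u z) p t u z).

Definition bedge (b : nat -> V -> R) (p : nat -> V -> V -> R) (t : nat)
  (u v : V) : R :=
  if #|[pred z | E z v]| == 1%N then b t v
  else b t v * p t u v / (\sum_(z | E z v) p t z v).

Definition dynamics (s d : V) (l : V -> R) (delta : R)
  (f b : nat -> V -> R) (p : nat -> V -> V -> R) : Prop :=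
  [/\ (forall t v, v != s ->
         f t.+1 v = (1 - l v) * \sum_(z | E z v) fedge f p t z v),
      (forall t u, u != d ->
         b t.+1 u = (1 - l u) * \sum_(z | E u z) bedge b p t u z) &
      (forall t u v, E u v ->
         p t.+1 u v = delta * (p t u v + fedge f p t u v + bedge b p t u v))].

Definition full_path (s d : V) (P : seq V) : seq V := s :: rcons P d.

Definition on_path (w : seq V) (u v : V) : bool := (u, v) \in zip w (behead w).

Definition two_parallel_paths (s d : V) (P1 P2 : seq V) : Prop :=
  [/\ uniq (full_path s d P1), uniq (full_path s d P2),
      ~~ has (fun x => x \in P2) P1,
      (forall u v, E u v = on_path (full_path s d P1) u v
                           || on_path (full_path s d P2) u v) &
      (forall v, (v \in full_path s d P1) || (v \in full_path s d P2))].

Definition path_leak (l : V -> R) (P : seq V) : R :=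
  1 - \prod_(v <- P) (1 - l v).

(** Ratio r_{s s_1}(t) and r_{d_1 d}(t); s_i = head d Pi, d_i = last s Pi. *)
Definition r_src (p : nat -> V -> V -> R) (s d : V) (P1 P2 : seq V) (t : nat) : R :=
  p t s (head d P1) / p t s (head d P2).

Definition r_dst (p : nat -> V -> V -> R) (s d : V) (P1 P2 : seq V) (t : nat) : R :=
  p t (last s P1) d / p t (last s P2) d.

Definition r_min (p : nat -> V -> V -> R) (s d : V) (P1 P2 : seq V)
  (L t : nat) : R :=
  \big[Num.min/r_src p s d P1 P2 t]_(i < L)
     Num.min (r_src p s d P1 P2 (t - i)) (r_dst p s d P1 P2 (t - i)).

Definition T1_pos (p0 : V -> V -> R) (fbar bbar delta : R) : R :=
  \big[Num.max/0]_(u : V) \big[Num.max/0]_(v | E u v)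
     (ln (p0 u v / (fbar + bbar)) / ln (delta^-1)).

End Model.

From HB Require Import structures.
From mathcomp Require Import all_boot all_order all_algebra.
From mathcomp Require Import boolp reals exp.
From mathcomp Require Import ring lra.
Import Order.TTheory GRing.Theory Num.Theory.
Local Open Scope ring_scope.
Set Implicit Arguments. Unset Strict Implicit.

(** Write [s1, s2] for the successors of [s] and [d1, d2] for the predecessors
    of [d].  Every internal vertex of the graph has a single in-edge and a
    single out-edge, so backward flow travels along each path [Pi] without
    being split: what enters the source edge [(s, si)] at time [t] is the
    fraction [1 - l_Pi] of what entered [(di, d)] at time [t - size Pi], and
    that was the share [p_{di d} / (p_{d1 d} + p_{d2 d})] of [bbar].  This gives
    a closed form for [r_{s s1}(t+1)] (lemma [source_ratio_next]).

    The ratio bounds [r_min <= r_{s s1}(t)] and [r_min <= r_{d1 d}(t - size Pi)]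
    control the two backward shares through the monotone map [x |-> x/(1+x)].
    Moreover, backward flows never exceed [bbar] (lemma [flow_invariant]), so
    the total source pheromone satisfies [S(t+1) <= delta (S t + fbar + 2 bbar)];
    once the initial pheromone has decayed ([t >= T1]) this bounds
    [S t + fbar] by [bbar C] (lemma [source_pheromone_total]).  An elementary
    inequality (lemma [potential_gain]) then yields the factor
    [(C + alpha) / (C + beta) = 1 + (alpha - beta) / (C + beta)]. *)

(** * Consecutive pairs of a sequence *)

Section ConsecutivePairs.
Variable T : eqType.
Implicit Types (x u v : T) (r : seq T).

Lemma mem_consec x r u v :
  (u, v) \in zip (x :: r) r -> (u \in belast x r) && (v \in r).
Proof.
elim: r x => [|y r IH] x //=.
rewrite in_cons => /orP [/eqP [-> ->]|/IH /andP [h1 h2]].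
  by rewrite !in_cons !eqxx.
by rewrite !in_cons h1 h2 !orbT.
Qed.

Lemma consec_succ_uniq x r u v v' :
  uniq (x :: r) -> (u, v) \in zip (x :: r) r -> (u, v') \in zip (x :: r) r ->
  v = v'.
Proof.
elim: r x => [|y r IH] x //= /andP [hx hu].
rewrite !in_cons => /orP [/eqP [e1 e2]|h1] /orP [/eqP [e3 e4]|h2].
- by rewrite e2 e4.
- by move/mem_consec: h2 => /andP [/mem_belast h3 _]; rewrite -e1 h3 in hx.
- by move/mem_consec: h1 => /andP [/mem_belast h3 _]; rewrite -e3 h3 in hx.
- exact: IH hu h1 h2.
Qed.

Lemma consec_pred_uniq x r u u' v :
  uniq (x :: r) -> (u, v) \in zip (x :: r) r -> (u', v) \in zip (x :: r) r ->
  u = u'.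
Proof.
elim: r x => [|y r IH] x //= /andP [_ hu].
have /andP [hy _] := hu.
rewrite !in_cons => /orP [/eqP [e1 e2]|h1] /orP [/eqP [e3 e4]|h2].
- by rewrite e1 e3.
- by move/mem_consec: h2 => /andP [_ h3]; rewrite -e2 h3 in hy.
- by move/mem_consec: h1 => /andP [_ h3]; rewrite -e4 h3 in hy.
- exact: IH hu h1 h2.
Qed.

Lemma consec_cat (pre rest : seq T) x y :
  (x, y) \in zip (pre ++ x :: y :: rest) (behead (pre ++ x :: y :: rest)).
Proof.
elim: pre => [|a pre IH] /=; first by rewrite in_cons eqxx.
by case: pre IH => [|a' pre] /= IH; rewrite in_cons IH orbT.
Qed.

Lemma consec_last x y r : (last x r, y) \in zip (x :: rcons r y) (rcons r y).
Proof.
elim: r x => [|z r IH] x /=; first exact: mem_head.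
by rewrite in_cons IH orbT.
Qed.

Lemma consec_succ_ex x r u :
  u \in belast x r -> exists v, (u, v) \in zip (x :: r) r.
Proof.
elim: r x => [|y r IH] x //=; rewrite in_cons.
case/orP => [/eqP ->|/IH [v hv]]; first by exists y; exact: mem_head.
by exists v; rewrite in_cons hv orbT.
Qed.

Lemma consec_pred_ex x r v : v \in r -> exists u, (u, v) \in zip (x :: r) r.
Proof.
elim: r x => [|y r IH] x //=; rewrite in_cons.
case/orP => [/eqP ->|/(IH y) [u hu]]; first by exists x; exact: mem_head.
by exists u; rewrite in_cons hu orbT.
Qed.

End ConsecutivePairs.

(** * The graph of two parallel paths *)

Lemma full_path_uniqP (V : finType) (s d : V) (P : seq V) :
  uniq (full_path s d P) -> [/\ s != d, s \notin P, d \notin P & uniq P].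
Proof.
rewrite /full_path /= mem_rcons in_cons negb_or rcons_uniq.
by case/andP => /andP [-> ->] /andP [-> ->].
Qed.

Lemma two_parallel_paths_sym (V : finType) (E : rel V) s d P1 P2 :
  two_parallel_paths E s d P1 P2 -> two_parallel_paths E s d P2 P1.
Proof.
case=> u1 u2 dis eE cov; split => //.
- apply/hasPn => x xP2; apply/negP => xP1.
  by move/hasPn: dis => /(_ x xP1); rewrite xP2.
- by move=> u v; rewrite orbC.
- by move=> v; rewrite orbC.
Qed.

Definition unique_succ (V : finType) (E : rel V) (u z0 : V) : Prop :=
  forall z, E u z = (z == z0).

Definition unique_pred (V : finType) (E : rel V) (u z1 : V) : Prop :=
  forall z, E z u = (z == z1).

Section FirstPath.
Variables (V : finType) (E : rel V) (s d : V) (P1 P2 : seq V).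
Hypothesis H : two_parallel_paths E s d P1 P2.

Lemma first_path_internal (u : V) : u \in P1 ->
  (exists z0, unique_succ E u z0) /\ (exists z1, unique_pred E u z1).
Proof.
move=> uP1; case: H => u1 _ dis eE _; case/full_path_uniqP: (u1) => _ sP1 dP1 _.
have uP2 : u \notin P2 by apply: (hasPn dis).
have us : u != s by apply: contraNneq sP1 => <-.
have ud : u != d by apply: contraNneq dP1 => <-.
split.
- have : u \in belast s (rcons P1 d) by rewrite belast_rcons in_cons uP1 orbT.
  case/consec_succ_ex => z0 hz0; exists z0 => z.
  rewrite eE /on_path /= [X in _ || X](contraNF _ uP2); last first.
    by case/mem_consec/andP; rewrite belast_rcons in_cons (negbTE us).
  by rewrite orbF; apply/idP/eqP => [h|->//]; exact: consec_succ_uniq u1 h hz0.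
- have : u \in rcons P1 d by rewrite mem_rcons in_cons uP1 orbT.
  case/(consec_pred_ex s) => z1 hz1; exists z1 => z.
  rewrite eE /on_path /= [X in _ || X](contraNF _ uP2); last first.
    by case/mem_consec/andP => _; rewrite mem_rcons in_cons (negbTE ud).
  by rewrite orbF; apply/idP/eqP => [h|->//]; exact: consec_pred_uniq u1 h hz1.
Qed.

End FirstPath.

Section TwoParallelPaths.
Variables (V : finType) (E : rel V) (s d : V) (P1 P2 : seq V).
Hypothesis H : two_parallel_paths E s d P1 P2.

Lemma edge_ends u v : E u v ->
  ((u \in s :: P1) && (v \in rcons P1 d)) || ((u \in s :: P2) && (v \in rcons P2 d)).
Proof.
case: H => _ _ _ eE _; rewrite eE /on_path /=.
by case/orP => /mem_consec; rewrite belast_rcons => ->; rewrite ?orbT.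
Qed.

Lemma edge_src_neq_d u v : E u v -> u != d.
Proof.
move/edge_ends; case: H => /full_path_uniqP [sd _ dP1 _] /full_path_uniqP [_ _ dP2 _] _ _ _.
by case/orP => /andP [hu _]; apply: contraTneq hu => ->;
   rewrite in_cons eq_sym (negbTE sd) ?(negbTE dP1) ?(negbTE dP2).
Qed.

Lemma edge_dst_neq_s u v : E u v -> v != s.
Proof.
move/edge_ends; case: H => /full_path_uniqP [sd sP1 _ _] /full_path_uniqP [_ sP2 _ _] _ _ _.
by case/orP => /andP [_ hv]; apply: contraTneq hv => ->;
   rewrite mem_rcons in_cons (negbTE sd) ?(negbTE sP1) ?(negbTE sP2).
Qed.

Lemma internal_vertex (u : V) : u != s -> u != d ->
  (exists z0, unique_succ E u z0) /\ (exists z1, unique_pred E u z1).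
Proof.
move=> us ud; have /orP [uP|uP] : (u \in P1) || (u \in P2).
  by case: H => _ _ _ _ /(_ u); rewrite !in_cons !mem_rcons !in_cons (negbTE us) (negbTE ud).
- exact: (first_path_internal H uP).
- exact: (first_path_internal (two_parallel_paths_sym H) uP).
Qed.

Lemma source_succ z : E s z = (z == head d P1) || (z == head d P2).
Proof.
case: H => u1 u2 _ eE _; rewrite eE.
have first_edge P : uniq (s :: rcons P d) -> on_path (s :: rcons P d) s z = (z == head d P).
  move=> uP; have hh : (s, head d P) \in zip (s :: rcons P d) (rcons P d).
    by case: P {uP} => [|a P] /=; exact: mem_head.
  by apply/idP/eqP => [h|->//]; exact: consec_succ_uniq uP h hh.
by rewrite !first_edge.
Qed.

Lemma dest_pred z : E z d = (z == last s P1) || (z == last s P2).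
Proof.
case: H => u1 u2 _ eE _; rewrite eE.
have last_edge P : uniq (s :: rcons P d) -> on_path (s :: rcons P d) z d = (z == last s P).
  move=> uP; apply/idP/eqP => [h|->]; last exact: consec_last.
  exact: consec_pred_uniq uP h (consec_last s d P).
by rewrite !last_edge.
Qed.

Lemma ends_neq : (P1 != [::]) || (P2 != [::]) ->
  (head d P1 != head d P2) /\ (last s P1 != last s P2).
Proof.
case: H => /full_path_uniqP [sd sP1 dP1 _] /full_path_uniqP [_ sP2 dP2 _] dis _ _.
have disj x : x \in P1 -> x \in P2 -> False by move=> h1 h2; move: (hasPn dis x h1); rewrite h2.
case: P1 sP1 dP1 disj {dis} => [|a Q1] sP1 dP1 disj;
  case: P2 sP2 dP2 disj => [|c Q2] sP2 dP2 disj //= _; split; apply/eqP => e.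
- by rewrite e mem_head in dP2.
- by move: (mem_last c Q2); rewrite -e => h; rewrite h in sP2.
- by rewrite -e mem_head in dP1.
- by move: (mem_last a Q1); rewrite e => h; rewrite h in sP1.
- by apply: (disj a); rewrite ?mem_head // e mem_head.
- by apply: (disj (last a Q1)); rewrite ?mem_last // e mem_last.
Qed.

Lemma first_path_edge pre x Q : s :: P1 = pre ++ x :: Q -> E x (head d Q).
Proof.
move=> hpre; case: H => _ _ _ eE _; rewrite eE /on_path.
have -> : full_path s d P1 = pre ++ x :: head d Q :: behead (rcons Q d).
  by rewrite /full_path -rcons_cons hpre rcons_cat /=; case: (Q).
by rewrite consec_cat.
Qed.

End TwoParallelPaths.

Section EdgeFlows.
Variables (R : realType) (V : finType) (E : rel V).
Implicit Types (f b : nat -> V -> R) (p : nat -> V -> V -> R).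

Lemma fedge_ge0 f p t u v :
  0 <= f t u -> (forall z, E u z -> 0 <= p t u z) -> E u v -> 0 <= fedge E f p t u v.
Proof.
move=> hf hp huv; rewrite /fedge; case: ifP => _ //.
by apply: divr_ge0; [apply: mulr_ge0 => //; apply: hp | apply: sumr_ge0].
Qed.

Lemma bedge_bounded b p t u v :
  0 <= b t v -> (forall z, E z v -> 0 < p t z v) -> E u v ->
  0 <= bedge E b p t u v <= b t v.
Proof.
move=> hb hp huv; rewrite /bedge; case: ifP => _; first by rewrite hb lexx.
set S := \sum_(z | E z v) p t z v.
have hS : p t u v <= S.
  by rewrite /S (bigD1 u) //= lerDl; apply: sumr_ge0 => z /andP [hz _]; exact: ltW (hp _ hz).
have hpu := hp _ huv; have S0 : 0 < S by apply: lt_le_trans hS.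
apply/andP; split; first by rewrite divr_ge0 // ?mulr_ge0 // ltW.
by rewrite ler_pdivrMr //; apply: ler_wpM2l.
Qed.

Lemma bedge_single b p t u v z1 : unique_pred E v z1 -> bedge E b p t u v = b t v.
Proof.
move=> hv; rewrite /bedge (_ : #|_| = 1%N) //.
by rewrite (@eq_card _ _ (pred1 z1)) ?card1 // => z; rewrite !inE hv.
Qed.

Lemma fedge_split2 f p t u v x y :
  x != y -> (forall z, E u z = (z == x) || (z == y)) ->
  fedge E f p t u v = f t u * p t u v / (p t u x + p t u y).
Proof.
move=> xy hu; rewrite /fedge (_ : #|_| = 2%N); last first.
  by rewrite (@eq_card _ _ (pred2 x y)) ?card2 ?xy // => z; rewrite !inE hu.
by rewrite /= (bigD1 x) ?hu ?eqxx // (big_pred1 y) // => z; rewrite /= hu;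
   case: (eqVneq z x) => [->|]; rewrite ?(negbTE xy) ?andbT.
Qed.

Lemma bedge_split2 b p t u v x y :
  x != y -> (forall z, E z v = (z == x) || (z == y)) ->
  bedge E b p t u v = b t v * p t u v / (p t x v + p t y v).
Proof.
move=> xy hv; rewrite /bedge (_ : #|_| = 2%N); last first.
  by rewrite (@eq_card _ _ (pred2 x y)) ?card2 ?xy // => z; rewrite !inE hv.
by rewrite /= (bigD1 x) ?hv ?eqxx // (big_pred1 y) // => z; rewrite /= hv;
   case: (eqVneq z x) => [->|]; rewrite ?(negbTE xy) ?andbT.
Qed.

End EdgeFlows.

(** * Elementary real inequalities *)

Lemma geometric_bound (R : realFieldType) (x : nat -> R) (delta K : R) :
  0 <= delta < 1 -> 0 <= K -> (forall t, x t.+1 <= delta * (x t + K)) ->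
  forall t, x t <= delta ^+ t * x 0%N + delta * K / (1 - delta).
Proof.
case/andP=> d0 d1 K0 step; elim=> [|t IH].
  by rewrite expr0 mul1r lerDl divr_ge0 ?mulr_ge0 // subr_ge0 ltW.
apply: le_trans (step t) _.
have -> : delta ^+ t.+1 * x 0%N + delta * K / (1 - delta) =
  delta * (delta ^+ t * x 0%N + delta * K / (1 - delta) + K).
  by rewrite exprS; field; rewrite subr_eq0 gt_eqF.
by apply: ler_wpM2l => //; rewrite lerD2r.
Qed.

Lemma decay_below (R : realType) (delta x c : R) (t : nat) :
  0 < delta < 1 -> 0 < x -> 0 < c ->
  ln (x / c) / ln delta^-1 <= t%:R -> delta ^+ t * x <= c.
Proof.
case/andP=> d0 d1 x0 c0 ht.
have lnd : 0 < ln delta^-1 by rewrite ln_gt0 // invf_gt1.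
have xc : x / c \is Num.pos by rewrite posrE divr_gt0.
have dt : delta^-1 ^+ t \is Num.pos by rewrite posrE exprn_gt0 ?invr_gt0.
rewrite ler_pdivrMr // mulr_natl -lnXn ?invr_gt0 // (ler_ln xc dt) in ht.
rewrite ler_pdivrMr // exprVn mulrC in ht.
by rewrite mulrC -ler_pdivlMr ?exprn_gt0.
Qed.

Lemma share_lower (R : realFieldType) (rho a1 a2 : R) :
  0 < a2 -> 0 <= rho -> rho <= a1 / a2 -> rho / (1 + rho) <= a1 / (a1 + a2).
Proof.
move=> a20 r0; rewrite ler_pdivlMr // => h.
have a0 : 0 < a1 + a2 by nra.
by rewrite ler_pdivrMr ?ltr_wpDr // mulrAC ler_pdivlMr //; nra.
Qed.

Lemma share_upper (R : realFieldType) (rho c1 c2 : R) :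
  0 < c2 -> 0 <= rho -> rho <= c1 / c2 -> c2 / (c1 + c2) <= 1 / (1 + rho).
Proof.
move=> c20 r0; rewrite ler_pdivlMr // => h.
have c0 : 0 < c1 + c2 by nra.
by rewrite ler_pdivrMr // mulrAC ler_pdivlMr ?ltr_wpDr //; nra.
Qed.

(** [k |-> (k + alpha u) / (k + beta u)] decreases when [beta < alpha]. *)
Lemma ratio_gain (R : realFieldType) (alpha beta u K C : R) :
  0 <= beta -> beta < alpha -> 0 < u -> 0 < K -> K <= u * C ->
  (C + alpha) / (C + beta) <= (K + alpha * u) / (K + beta * u).
Proof.
move=> b0 ab u0 K0 KC.
have C0 : 0 < C by rewrite -(pmulr_rgt0 _ u0); apply: lt_le_trans KC.
have D0 : 0 < K + beta * u by nra.
have D1 : 0 < C + beta by nra.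
by rewrite ler_pdivlMr // mulrAC ler_pdivrMr //; nra.
Qed.

(** The one-step gain of the potential, as an inequality between reals: the
    pheromone ratio at the source after one step, written in terms of the
    current source pheromones [p1], [p2] and of the destination pheromones
    [a1, a2] (resp. [c1, c2]) at the times when the backward flow now reaching
    the source along [P1] (resp. [P2]) left the destination. *)
Lemma potential_gain (R : realFieldType)
    (fbar bbar alpha beta p1 p2 a1 a2 c1 c2 rho C : R) :
  0 < fbar -> 0 < bbar -> 0 < p1 -> 0 < p2 -> 0 < a2 -> 0 < c2 -> 0 < rho ->
  0 <= beta -> beta < alpha ->
  rho <= p1 / p2 -> rho <= a1 / a2 -> rho <= c1 / c2 ->
  p1 + p2 + fbar <= bbar * C ->
  rho * (1 + (alpha - beta) / (C + beta)) <=
    (p1 + fbar * p1 / (p1 + p2) + alpha * (bbar * a1 / (a1 + a2))) /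
    (p2 + fbar * p2 / (p1 + p2) + beta * (bbar * c2 / (c1 + c2))).
Proof.
move=> f0 b0 p10 p20 a20 c20 r0 be0 ab hp ha hc hC.
have S0 : 0 < p1 + p2 by rewrite addr_gt0.
set q := 1 + fbar / (p1 + p2); set u := bbar / (1 + rho).
have q0 : 0 < q by rewrite addr_gt0 ?divr_gt0.
have u0 : 0 < u by rewrite divr_gt0 ?addr_gt0.
have -> : p1 + fbar * p1 / (p1 + p2) = p1 * q by rewrite /q; field; rewrite lt0r_neq0.
have -> : p2 + fbar * p2 / (p1 + p2) = p2 * q by rewrite /q; field; rewrite lt0r_neq0.
set G1 := bbar * a1 / (a1 + a2); set G2 := bbar * c2 / (c1 + c2).
have G1_ge : rho * u <= G1.
  have -> : rho * u = bbar * (rho / (1 + rho)) by rewrite /u mulrCA mulrA.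
  rewrite /G1 -mulrA; apply: ler_wpM2l; first exact: ltW.
  by apply: share_lower; rewrite // ltW.
have G2_le : G2 <= u.
  rewrite /G2 /u -mulrA -[(1 + rho)^-1]mul1r; apply: ler_wpM2l; first exact: ltW.
  by apply: share_upper; rewrite // ltW.
have G2_ge0 : 0 <= G2.
  rewrite ler_pdivlMr // in hc.
  by rewrite /G2 divr_ge0 ?mulr_ge0 ?ltW //; nra.
set K := p2 * q; have K0 : 0 < K by rewrite mulr_gt0.
have KC : K <= u * C.
  have : K * (1 + rho) <= (p1 + p2) * q by rewrite /K; rewrite ler_pdivlMr // in hp; nra.
  have -> : (p1 + p2) * q = p1 + p2 + fbar by rewrite /q; field; rewrite lt0r_neq0.
  by move=> h; rewrite /u mulrAC ler_pdivlMr ?addr_gt0 //; exact: (le_trans h hC).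
have gain := ratio_gain be0 ab u0 K0 KC.
have C0 : 0 < C by rewrite -(pmulr_rgt0 _ u0); exact: (lt_le_trans K0 KC).
have -> : 1 + (alpha - beta) / (C + beta) = (C + alpha) / (C + beta).
  by field; rewrite lt0r_neq0 // ltr_wpDr.
have D0 : 0 < K + beta * G2 by apply: (lt_le_trans K0); rewrite lerDl mulr_ge0.
rewrite ler_pdivlMr //; apply: (@le_trans _ _ (rho * (K + alpha * u))).
  rewrite -mulrA; apply: ler_wpM2l; first exact: ltW.
  have KD : 0 < K + beta * u by apply: (lt_le_trans K0); rewrite lerDl mulr_ge0 // ltW.
  rewrite ler_pdivlMr // in gain; apply: le_trans gain.
  apply: ler_wpM2l; first by rewrite divr_ge0 // addr_ge0 // ltW // (le_lt_trans be0).
  by rewrite lerD2l; apply: ler_wpM2l.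
rewrite mulrDr; apply: lerD.
  by rewrite /K mulrA; apply: ler_wpM2r; [exact: ltW | rewrite -ler_pdivlMr].
by rewrite mulrCA; apply: ler_wpM2l => //; rewrite ltW // (le_lt_trans be0).
Qed.

Section Potential.
Variables (R : realType) (V : finType) (p : nat -> V -> V -> R) (s d : V) (P1 P2 : seq V).

Lemma r_min_le_src L t : r_min p s d P1 P2 L t <= r_src p s d P1 P2 t.
Proof. exact: bigmin_le_id. Qed.

Lemma r_min_le_dst L t j : (j < L)%N -> r_min p s d P1 P2 L t <= r_dst p s d P1 P2 (t - j).
Proof.
move=> jL; apply: (le_trans (bigmin_le _ (Ordinal jL) _)).
by rewrite ge_min lexx orbT.
Qed.

Lemma r_min_gt0 L t :
  (forall tau, 0 < r_src p s d P1 P2 tau) -> (forall tau, 0 < r_dst p s d P1 P2 tau) ->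
  0 < r_min p s d P1 P2 L t.
Proof. by move=> hs hd; apply: lt_bigmin => // i _; rewrite lt_min hs hd. Qed.

End Potential.

Lemma T1_pos_ge (R : realType) (V : finType) (E : rel V) (p0 : V -> V -> R)
    (fbar bbar delta : R) u v :
  E u v -> ln (p0 u v / (fbar + bbar)) / ln delta^-1 <= T1_pos E p0 fbar bbar delta.
Proof. by move=> huv; apply: (le_trans _ (le_bigmax _ _ u)); exact: le_bigmax_cond. Qed.

Lemma T1_pos_ge0 (R : realType) (V : finType) (E : rel V) (p0 : V -> V -> R)
    (fbar bbar delta : R) : 0 <= T1_pos E p0 fbar bbar delta.
Proof. exact: bigmax_ge_id. Qed.

(** * The fixed-flow dynamics on two parallel paths *)

Section FixedFlowDynamics.
Variables (R : realType) (V : finType) (E : rel V) (s d : V) (P1 P2 : seq V).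
Variables (l : V -> R) (delta fbar bbar : R).
Variables (f b : nat -> V -> R) (p : nat -> V -> V -> R).
Hypothesis H : two_parallel_paths E s d P1 P2.
Hypothesis hl : forall v, 0 <= l v <= 1.
Hypothesis hdelta : 0 < delta < 1.
Hypothesis hfbar : 0 < fbar.
Hypothesis hbbar : 0 < bbar.
Hypothesis dyn : dynamics E s d l delta f b p.
Hypothesis hfs : forall t, f t s = fbar.
Hypothesis hbd : forall t, b t d = bbar.
Hypothesis hp0 : forall u v, E u v -> 0 < p 0%N u v.
Hypothesis h0 : forall v, v != s -> v != d ->
  0 <= f 0%N v <= fbar /\ 0 <= b 0%N v <= bbar.

Lemma flow_invariant t :
  [/\ forall u v, E u v -> 0 < p t u v,
      forall u, u != d -> 0 <= f t u &
      forall v, v != s -> 0 <= b t v <= bbar].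
Proof.
case: dyn => dF dB dP; have [d0 _] := andP hdelta.
elim: t => [|t [IHp IHf IHb]].
  split=> // [u ud|v vs].
    by case: (eqVneq u s) => [->|us]; [rewrite hfs ltW | case: (h0 us ud) => /andP []].
  by case: (eqVneq v d) => [->|vd]; [rewrite hbd ltW ?lexx | case: (h0 vs vd)].
have fedge0 u v : E u v -> 0 <= fedge E f p t u v.
  move=> huv; apply: fedge_ge0 => //; first exact: (IHf _ (edge_src_neq_d H huv)).
  by move=> z /IHp /ltW.
have bedgeP u v : E u v -> 0 <= bedge E b p t u v <= b t v.
  move=> huv; apply: bedge_bounded => //; last by move=> z /IHp.
  by case/andP: (IHb v (edge_dst_neq_s H huv)).
split.
- move=> u v huv; have /andP [be0 _] := bedgeP _ _ huv.
  by rewrite dP // pmulr_rgt0 // ltr_wpDr // ltr_wpDr ?fedge0 ?IHp.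
- move=> u ud; case: (eqVneq u s) => [->|us]; first by rewrite hfs ltW.
  rewrite dF // mulr_ge0 ?subr_ge0 ?(andP (hl u)).2 //.
  by apply: sumr_ge0 => z; apply: fedge0.
- move=> v vs; case: (eqVneq v d) => [->|vd]; first by rewrite hbd ltW ?lexx.
  have [[z0 hz0] _] := internal_vertex H vs vd.
  have hE : E v z0 by rewrite hz0.
  have /andP [bz0 bz1] := IHb z0 (edge_dst_neq_s H hE).
  have /andP [be0 be1] := bedgeP _ _ hE.
  have /andP [lv0 lv1] := hl v.
  rewrite dB // (big_pred1 z0) //; apply/andP; split; first by rewrite mulr_ge0 ?subr_ge0.
  apply: le_trans bz1; rewrite -[b t z0]mul1r.
  by apply: ler_pM; rewrite ?subr_ge0 // lerBlDr lerDl.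
Qed.

Lemma pheromone_pos t u v : E u v -> 0 < p t u v.
Proof. by case: (flow_invariant t) => + _ _; apply. Qed.

Lemma backward_transport pre x Q t :
  s :: P1 = pre ++ x :: Q -> (size Q <= t)%N ->
  bedge E b p t x (head d Q) =
    (\prod_(v <- Q) (1 - l v)) * bedge E b p (t - size Q) (last x Q) d.
Proof.
case: dyn => _ dB _; case: H => u1 _ _ _ _; case/full_path_uniqP: u1 => _ sP1 dP1 _.
elim: Q x pre t => [|y Q IH] x pre t hpre ht; first by rewrite big_nil mul1r subn0.
case: t ht => [|t] // ht.
have yP1 : y \in P1.
  case: pre hpre => [|a pre] /= [_ ->]; first exact: mem_head.
  by rewrite mem_cat !in_cons eqxx !orbT.
have ys : y != s by apply: contraNneq sP1 => <-.
have yd : y != d by apply: contraNneq dP1 => <-.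
have [[z0 hz0] [z1 hz1]] := internal_vertex H ys yd.
have hpre' : s :: P1 = rcons pre x ++ y :: Q by rewrite cat_rcons.
have /eqP e0 : head d Q == z0 by rewrite -hz0 (first_path_edge H hpre').
rewrite (bedge_single _ _ _ _ hz1) dB // (big_pred1 z0) // -e0.
by rewrite (IH y (rcons pre x)) // big_cons subSS mulrA.
Qed.

Local Notation s1 := (head d P1).
Local Notation s2 := (head d P2).

Lemma backward_flow_at_source t : (size P1 <= t)%N ->
  bedge E b p t s s1 =
    (\prod_(v <- P1) (1 - l v)) * bedge E b p (t - size P1) (last s P1) d.
Proof. exact: (backward_transport (pre := [::])). Qed.

Lemma source_pheromone_next t z : s1 != s2 -> E s z ->
  p t.+1 s z =
    delta * (p t s z + fbar * p t s z / (p t s s1 + p t s s2) + bedge E b p t s z).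
Proof.
case: dyn => _ _ dP hne hz.
by rewrite dP // (fedge_split2 _ _ _ _ hne (source_succ H)) hfs.
Qed.

(** The total source pheromone follows [S(t+1) <= delta (S t + fbar + 2 bbar)]:
    the forward flow [fbar] is split between the two edges and each edge
    receives at most [bbar] of backward flow. *)
Lemma source_sum_step t : s1 != s2 ->
  p t.+1 s s1 + p t.+1 s s2 <= delta * (p t s s1 + p t s s2 + (fbar + 2 * bbar)).
Proof.
move=> hne; have hE1 : E s s1 by rewrite (source_succ H) eqxx.
have hE2 : E s s2 by rewrite (source_succ H) eqxx orbT.
have [pos _ bnd] := flow_invariant t.
have bedge_le z : E s z -> bedge E b p t s z <= bbar.
  move=> hz; have /andP [bz0 bz1] := bnd z (edge_dst_neq_s H hz).
  have /andP [_ ] := bedge_bounded bz0 (fun y hy => pos y z hy) hz.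
  by move/le_trans; apply.
have p1 := pos _ _ hE1; have p2 := pos _ _ hE2.
have fsum : fbar * p t s s1 / (p t s s1 + p t s s2) + fbar * p t s s2 / (p t s s1 + p t s s2)
    = fbar by field; rewrite lt0r_neq0 // addr_gt0.
rewrite !source_pheromone_next // -mulrDr; apply: ler_wpM2l; first exact: ltW (andP hdelta).1.
move: fsum (bedge_le _ hE1) (bedge_le _ hE2); lra.
Qed.

Lemma source_pheromone_total t : s1 != s2 ->
  T1_pos E (p 0%N) fbar bbar delta <= t%:R ->
  p t s s1 + p t s s2 + fbar <= 5 * (fbar + bbar) / (1 - delta).
Proof.
move=> hne hT; have [d0 d1] := andP hdelta.
have hE1 : E s s1 by rewrite (source_succ H) eqxx.
have hE2 : E s s2 by rewrite (source_succ H) eqxx orbT.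
have hd : 0 <= delta < 1 by rewrite ltW.
have K0 : 0 <= fbar + 2 * bbar by rewrite addr_ge0 ?mulr_ge0 ?ltW.
have geo := geometric_bound (x := fun t => p t s s1 + p t s s2) hd K0
  (fun t => source_sum_step t hne) t.
have decayed z : E s z -> delta ^+ t * p 0%N s z <= fbar + bbar.
  move=> hz; apply: decay_below; rewrite ?addr_gt0 ?hp0 //.
  exact: (le_trans (T1_pos_ge _ _ _ _ hz) hT).
have e0 : 0 < 1 - delta by rewrite subr_gt0.
set Q := delta * (fbar + 2 * bbar) / (1 - delta) in geo.
have hQ : Q * (1 - delta) = delta * (fbar + 2 * bbar) by rewrite /Q; field; rewrite gt_eqF.
have hS : p t s s1 + p t s s2 <= 2 * (fbar + bbar) + Q.
  by move: geo (decayed _ hE1) (decayed _ hE2); rewrite /= mulrDr; lra.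
rewrite ler_pdivlMr //; apply: (le_trans (y := (2 * (fbar + bbar) + Q + fbar) * (1 - delta))).
  by apply: ler_wpM2r; rewrite ?lerD2r // ltW.
have -> : (2 * (fbar + bbar) + Q + fbar) * (1 - delta)
  = 5 * (fbar + bbar) - (2 * fbar + 3 * bbar + 2 * (delta * fbar))
    + (Q * (1 - delta) - delta * (fbar + 2 * bbar)) by ring.
by rewrite hQ subrr addr0 lerBlDr lerDl !addr_ge0 ?mulr_ge0 ?ltW.
Qed.

End FixedFlowDynamics.

Lemma path_transmission (R : realType) (V : finType) (l : V -> R) (P : seq V) :
  1 - path_leak l P = \prod_(v <- P) (1 - l v).
Proof. by rewrite /path_leak subKr. Qed.

Section SourceRatio.
Variables (R : realType) (V : finType) (E : rel V) (s d : V) (P1 P2 : seq V).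
Variables (l : V -> R) (delta fbar bbar : R).
Variables (f b : nat -> V -> R) (p : nat -> V -> V -> R).
Hypothesis H : two_parallel_paths E s d P1 P2.
Hypothesis hdelta : 0 < delta.
Hypothesis dyn : dynamics E s d l delta f b p.
Hypothesis hfs : forall t, f t s = fbar.
Hypothesis hbd : forall t, b t d = bbar.

Local Notation s1 := (head d P1).
Local Notation s2 := (head d P2).
Local Notation d1 := (last s P1).
Local Notation d2 := (last s P2).

(** Once both paths have been traversed, [r_src (t+1)] is determined by the
    source pheromones at time [t] and by the destination pheromones at times
    [t - size P1] and [t - size P2], when the backward flow now reaching the
    source left the destination. *)
Lemma source_ratio_next t :
  s1 != s2 -> d1 != d2 -> (size P1 <= t)%N -> (size P2 <= t)%N ->
  let t1 := (t - size P1)%N in let t2 := (t - size P2)%N in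
  let S := p t s s1 + p t s s2 in
  r_src p s d P1 P2 t.+1 =
    (p t s s1 + fbar * p t s s1 / S
       + (1 - path_leak l P1) * (bbar * p t1 d1 d / (p t1 d1 d + p t1 d2 d))) /
    (p t s s2 + fbar * p t s s2 / S
       + (1 - path_leak l P2) * (bbar * p t2 d2 d / (p t2 d1 d + p t2 d2 d))).
Proof.
move=> hs12 hd12 ht1 ht2 t1 t2 S.
have hE1 : E s s1 by rewrite (source_succ H) eqxx.
have hE2 : E s s2 by rewrite (source_succ H) eqxx orbT.
rewrite /r_src !(source_pheromone_next H dyn hfs t hs12) //.
rewrite (backward_flow_at_source H dyn ht1).
rewrite (backward_flow_at_source (two_parallel_paths_sym H) dyn ht2).
rewrite !(bedge_split2 _ _ _ _ hd12 (dest_pred H)) !hbd !path_transmission.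
by rewrite -mulf_div divff ?mul1r ?gt_eqF.
Qed.

End SourceRatio.

Unset Implicit Arguments.

Theorem mainTheorem10 (R : realType) (V : finType) (E : rel V) (s d : V)
  (P1 P2 : seq V) (l : V -> R) (delta fbar bbar : R)
  (f b : nat -> V -> R) (p : nat -> V -> V -> R) :
  two_parallel_paths E s d P1 P2 ->
  (forall v, 0 <= l v <= 1) ->
  0 < delta < 1 ->
  0 < fbar -> 0 < bbar ->
  dynamics E s d l delta f b p ->
  (forall t, f t s = fbar) ->
  (forall t, b t d = bbar) ->
  (forall u v, E u v -> 0 < p 0%N u v) ->
  (forall v, v != s -> v != d -> 0 <= f 0%N v <= fbar /\ 0 <= b 0%N v <= bbar) ->
  path_leak l P1 < path_leak l P2 ->
  let m := (size P1).+1 in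
  let n := (size P2).+1 in
  let L := maxn m n in
  let alpha := 1 - path_leak l P1 in
  let beta := 1 - path_leak l P2 in
  let C := 5 * (fbar + bbar) / (bbar * (1 - delta)) in
  forall t : nat,
    (L%:R + T1_pos E (p 0%N) fbar bbar delta <= t%:R :> R) ->
    r_src p s d P1 P2 t.+1 >=
      r_min p s d P1 P2 L t * (1 + (alpha - beta) / (C + beta)).
Proof.
move=> H hl hdelta hfbar hbbar dyn hfs hbd hp0 h0 hleak m n L alpha beta C t ht.
have [hs12 hd12] : (head d P1 != head d P2) /\ (last s P1 != last s P2).
  by apply: (ends_neq H); move: hleak; case: (P1) (P2) => [|? ?] [|? ?]; rewrite ?ltxx.
have [d0 d1] := andP hdelta.
have pos := pheromone_pos H hl hdelta hfbar hbbar dyn hfs hbd hp0 h0.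
have hT1 : T1_pos E (p 0%N) fbar bbar delta <= t%:R by apply: le_trans ht; rewrite lerDr.
have hLt : (L <= t)%N by rewrite -(ler_nat R); apply: le_trans ht; rewrite lerDl T1_pos_ge0.
have hL1 : (size P1 < L)%N by rewrite leq_max leqnn.
have hL2 : (size P2 < L)%N by rewrite leq_max leqnn orbT.
rewrite (source_ratio_next H d0 dyn hfs hbd hs12 hd12
  (ltnW (leq_trans hL1 hLt)) (ltnW (leq_trans hL2 hLt))).
have hE1 : E s (head d P1) by rewrite (source_succ H) eqxx.
have hE2 : E s (head d P2) by rewrite (source_succ H) eqxx orbT.
have hD1 : E (last s P1) d by rewrite (dest_pred H) eqxx.
have hD2 : E (last s P2) d by rewrite (dest_pred H) eqxx orbT.
apply: potential_gain; rewrite ?pos //.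
- by apply: r_min_gt0 => tau; rewrite divr_gt0 ?pos.
- by rewrite /beta path_transmission prodr_ge0 // => v _; rewrite subr_ge0 (andP (hl v)).2.
- by rewrite /alpha /beta ltrD2l ltrN2.
- exact: r_min_le_src.
- exact: r_min_le_dst hL1.
- exact: r_min_le_dst hL2.
- have -> : bbar * C = 5 * (fbar + bbar) / (1 - delta).
    by rewrite /C; field; rewrite subr_eq0 !gt_eqF.
  exact: (source_pheromone_total H hl hdelta hfbar hbbar dyn hfs hbd hp0 h0 hs12 hT1).
Qed.
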